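(* Let $\Omega$ be an infinite locally compact metric space, $T:\Omega\to\Omega$ continuous, and $\nu$ a nonzero Radon measure on $(\Omega,\mathcal{B}(\Omega))$. If the dynamical system $(\Omega,T)$ is chaotic with respect to $\nu$, then it is topologically transitive.
   Context: $(\Omega,T)$ is chaotic with respect to $\nu$ if for $\nu$-almost every $x_0\in\Omega$ and every nonempty open $U\subset\Omega$ there is $n\in\mathbb{N}$ with $T^n(x_0)\in U$. $(\Omega,T)$ is topologically transitive if for all nonempty open sets $U,V\subset\Omega$ there exists $n\ge0$ with $T^{-n}(U)\cap V\neq\emptyset$. *)

From HB Require Import structures.
From mathcomp Require Import all_boot all_order all_algebra.
From mathcomp Require Import all_classical all_reals all_analysis.
Set Implicit Arguments. Unset Strict Implicit. Unset Printing Implicit Defensive.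
Import Order.TTheory GRing.Theory Num.Theory.
Local Open Scope classical_set_scope.
Local Open Scope ring_scope.

(* A metric space with a distinguished point (needed only because
   MathComp-Analysis' measurable types are pointed; harmless here since the
   spaces considered are infinite, hence nonempty). *)
#[short(type="pmetricType")]
HB.structure Definition PointedMetric (K : numDomainType) :=
  { M of Pointed M & Metric K M }.

Definition Borel (T : ptopologicalType) := g_sigma_algebraType (@open T).

Definition radon_measure (R : realType) (T : ptopologicalType)
    (nu : {measure set (Borel T) -> \bar R}) : Prop :=
  [/\ (forall K : set T, compact K -> (nu K < +oo)%E),
      (forall A : set (Borel T), measurable A ->
         nu A = ereal_inf [set nu (U : set (Borel T)) | U in
                             [set U : set T | open U /\ A `<=` U]]) &
      (forall U : set T, open U ->
         nu U = ereal_sup [set nu (K : set (Borel T)) | K in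
                             [set K : set T | compact K /\ K `<=` U]])].

(* (Omega, f) is chaotic w.r.t. nu: for nu-a.e. x0, every nonempty open U
   is visited by T^n x0 for some n in N = {1, 2, ...}. *)
Definition chaotic_wrt (R : realType) (T : ptopologicalType) (f : T -> T)
    (nu : {measure set (Borel T) -> \bar R}) : Prop :=
  {ae nu, forall x0 : Borel T, forall U : set T, open U -> U !=set0 ->
            exists n : nat, U (iter n.+1 f x0)}.

Definition topologically_transitive (T : topologicalType) (f : T -> T) : Prop :=
  forall U V : set T, open U -> open V -> U !=set0 -> V !=set0 ->
    exists n : nat, (iter n f @^-1` U) `&` V !=set0.

From HB Require Import structures.
From mathcomp Require Import all_boot all_order all_algebra.
From mathcomp Require Import all_classical all_reals all_analysis.
Import Order.TTheory GRing.Theory Num.Theory.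
Local Open Scope classical_set_scope.
Local Open Scope ring_scope.

(* Since nu is nonzero, chaos yields a point x whose forward orbit visits
   every nonempty open set; it suffices to show that the orbit then visits
   every nonempty open U at arbitrarily late times, for if f^b x lies in V
   and f^n x lies in U with n >= b, then f^(n-b) maps a point of V into U.
   Suppose the visits of U all happen before time m. Then U minus the
   (closed, by T1) finite orbit prefix is an open set the orbit never
   visits, hence empty: U is finite, so its points are isolated. Pulling an
   isolated orbit point f^(a+1) x back by the continuous f^(a+1) gives an
   open neighbourhood of x which is again visited only finitely often, so x
   itself is isolated; the orbit returns to {x}, x is periodic, and the
   orbit visits U infinitely often after all. *)

Lemma ae_witness {d} {T : measurableType d} {R : realType}
    {mu : {measure set T -> \bar R}} {P : T -> Prop} {A : set T} :
  measurable A -> mu A <> 0%E -> {ae mu, forall x, P x} -> exists x, P x.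
Proof.
move=> mA muA [N [mN muN0 notP_sub]]; apply: contrapT => noP.
apply: muA; apply/eqP; rewrite eq_le measure_ge0 andbT -muN0.
apply: le_measure; rewrite ?inE // => x _.
by apply: notP_sub => Px; apply: noP; exists x.
Qed.

Section OrbitVisitingEveryOpenSet.
Context {T : topologicalType} (f : T -> T).
Hypothesis T1 : accessible_space T.
Hypothesis f_cont : continuous f.

Lemma continuous_iter n : continuous (iter n f).
Proof.
elim: n => [|n IH] x /=; first exact: cvg_id.
exact: continuous_comp (IH x) (f_cont _).
Qed.

Lemma finite_open_set1 {U : set T} {p : T} : open U -> finite_set U -> U p ->
  open [set p].
Proof.
move=> oU finU Up.
have -> : [set p] = U `\` (U `\` [set p]).
  apply/seteqP; split => [x ->|x [Ux nx]]; first by split => // -[_ []].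
  by apply: contrapT => xp; apply: nx.
apply: openI => //; apply: closed_openC; apply: (accessible_finite_set_closed.1 T1).
by apply: sub_finite_set finU => x [].
Qed.

Variable x : T.
Hypothesis x_visits : forall U : set T, open U -> U !=set0 ->
  exists n : nat, U (iter n.+1 f x).

Let orbit_prefix m := [set iter k.+1 f x | k in `I_m].

Lemma finite_orbit_prefix m : finite_set (orbit_prefix m).
Proof. exact: finite_image (finite_II m). Qed.

Lemma open_sub_orbit_prefix {U : set T} {m : nat} : open U ->
  (forall n, U (iter n.+1 f x) -> (n < m)%N) -> U `<=` orbit_prefix m.
Proof.
move=> oU early y Uy; apply: contrapT => yNprefix.
have oUD : open (U `\` orbit_prefix m).
  apply: openI => //; apply: closed_openC.
  by apply: (accessible_finite_set_closed.1 T1); exact: finite_orbit_prefix.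
have [n [Un nNprefix]] := x_visits _ oUD (ex_intro _ y (conj Uy yNprefix)).
by apply: nNprefix; exists n => //; exact: early.
Qed.

Lemma isolated_in_early_visited {U : set T} {m : nat} {p : T} : open U -> U p ->
  (forall n, U (iter n.+1 f x) -> (n < m)%N) -> open [set p].
Proof.
move=> oU Up early; apply: (finite_open_set1 oU _ Up).
exact: sub_finite_set (open_sub_orbit_prefix oU early) (finite_orbit_prefix m).
Qed.

Lemma orbit_visits_late {U : set T} (m : nat) : open U -> U !=set0 ->
  exists2 n, (m <= n)%N & U (iter n.+1 f x).
Proof.
move=> oU [q Uq]; apply: contrapT => noLate.
have early n : U (iter n.+1 f x) -> (n < m)%N.
  by move=> Un; rewrite ltnNge; apply/negP => mn; apply: noLate; exists n.
have [a _ fax] := open_sub_orbit_prefix oU early _ Uq.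
pose N := iter a.+1 f @^-1` [set q].
have q_isolated := isolated_in_early_visited oU Uq early.
have oN : open N by exact: (continuousP _).1 (continuous_iter a.+1) _ q_isolated.
have earlyN n : N (iter n.+1 f x) -> (n < m)%N.
  move=> Nn; have /early : U (iter (a + n.+1).+1 f x) by rewrite -addSn iterD Nn.
  by move=> /(leq_ltn_trans (leq_addl a n.+1))/ltnW.
have [p fpx] := x_visits _ (isolated_in_early_visited oN fax earlyN)
  (ex_intro _ x erefl).
have periodic t : iter (t * p.+1) f x = x.
  by elim: t => [|t IH] //; rewrite mulSn iterD IH; exact: fpx.
have /early : U (iter (a + m * p.+1).+1 f x).
  by rewrite -addSn iterD periodic fax.
by rewrite ltnNge mulnS addnCA leq_addr.
Qed.

Lemma topologically_transitive_of_orbit_visits : topologically_transitive f.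
Proof.
move=> U V oU oV nU nV.
have [b Vb] := x_visits _ oV nV.
have [n bn Un] := orbit_visits_late b oU nU.
exists (n - b)%N, (iter b.+1 f x); split => //=.
by rewrite -[f _]/(iter b.+1 f x) -iterD addnS subnK.
Qed.

End OrbitVisitingEveryOpenSet.

Theorem mainTheorem4 (R : realType) (Omega : pmetricType R) (f : Omega -> Omega)
    (nu : {measure set (Borel Omega) -> \bar R}) :
  ~ finite_set [set: Omega] ->
  locally_compact [set: Omega] ->
  continuous f ->
  radon_measure nu ->
  (exists A : set (Borel Omega), measurable A /\ nu A <> 0%E) ->
  chaotic_wrt f nu ->
  topologically_transitive f.
Proof.
move=> _ _ f_cont _ [A [mA nuA]] chaotic.
have [x x_visits] := ae_witness mA nuA chaotic.
have T1 : accessible_space Omega by exact/hausdorff_accessible/metric_hausdorff.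
exact: topologically_transitive_of_orbit_visits f T1 f_cont x x_visits.
Qed.
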